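(* Let $A$ be a physical system of dimension $m$ whose Hamiltonian has a non-degenerate Bohr spectrum, with energy eigenbasis $\{|x\rangle\}$ and Gibbs state $\gamma^A$. Let $\rho,\sigma$ be states on $A$ with $r_{xy}\coloneqq\langle x|\rho|y\rangle$, $s_{xy}\coloneqq\langle x|\sigma|y\rangle$. Suppose $r_{xy}\neq0$ for all $x,y\in[m]$ and $r_{xx}=s_{xx}$ for all $x\in[m]$. Then there exists $\mathcal{E}\in\mathrm{GPC}(A\to A)$ with $\mathcal{E}(\rho)=\sigma$ if and only if $$Q^A\coloneqq I^A+\sum_{x\neq y\in[m]}\frac{s_{xy}}{r_{xy}}|x\rangle\langle y|^A\geq0.$$
   Context: The Hamiltonian $H^A=\sum_x a_x|x\rangle\langle x|$ has a non-degenerate Bohr spectrum if for all $x,y,x',y'$: $a_x-a_y=a_{x'}-a_{y'}$ holds iff ($x=x'$ and $y=y'$) or ($x=y$ and $x'=y'$). For fixed inverse temperature $\beta>0$ the Gibbs state is $\gamma^A=e^{-\beta H^A}/\mathrm{Tr}[e^{-\beta H^A}]$. $\mathrm{GPC}(A\to A)$ is the set of quantum channels $\mathcal{E}:A\to A$ with $\mathcal{E}(\gamma^A)=\gamma^A$ and $\mathcal{E}(e^{-iH^At}\rho e^{iH^At})=e^{-iH^At}\mathcal{E}(\rho)e^{iH^At}$ for all $t\in\mathbb{R}$ and states $\rho$. *)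

From HB Require Import structures.
From mathcomp Require Import all_boot all_order all_algebra.
From mathcomp.real_closed Require Import complex mxtens.
From mathcomp Require Import reals.
From mathcomp.analysis Require Import sequences exp trigo.
Set Implicit Arguments. Unset Strict Implicit. Unset Printing Implicit Defensive.
Import Order.TTheory GRing.Theory Num.Theory.
Local Open Scope ring_scope.
Local Open Scope complex_scope.

Section Defs.
Variable R : realType.
Local Notation C := R[i].

Definition adjmx m n (A : 'M[C]_(m, n)) : 'M[C]_(n, m) := (map_mx conjc A)^T.

Definition psd n (A : 'M[C]_n) : Prop :=
  adjmx A = A /\ forall v : 'cV[C]_n, 0 <= (adjmx v *m A *m v) 0 0.

Definition is_state n (rho : 'M[C]_n) : Prop := psd rho /\ \tr rho = 1.

(* ampliation id_n (x) E acting on block matrices 'M_(n*m),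
   index (i,a) <-> mxtens_index (i,a), i : 'I_n (ancilla), a : 'I_m (system) *)
Definition ampl n m (E : 'M[C]_m -> 'M[C]_m) (X : 'M[C]_(n * m)) : 'M[C]_(n * m) :=
  \matrix_(p, q)
    E (\matrix_(a, b) X (mxtens_index ((mxtens_unindex p).1, a))
                        (mxtens_index ((mxtens_unindex q).1, b)))
      (mxtens_unindex p).2 (mxtens_unindex q).2.

Definition quantum_channel m (E : 'M[C]_m -> 'M[C]_m) : Prop :=
  [/\ forall (c : C) (X Y : 'M[C]_m), E (c *: X + Y) = c *: E X + E Y,
      forall X, \tr (E X) = \tr X
    & forall n (X : 'M[C]_(n * m)), psd X -> psd (ampl E X)].

Definition nondeg_bohr m (a : 'I_m -> R) : Prop :=
  forall x y x' y' : 'I_m,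
    a x - a y = a x' - a y' <-> ((x = x' /\ y = y') \/ (x = y /\ x' = y')).

Definition hamiltonian m (a : 'I_m -> R) : 'M[C]_m :=
  diag_mx (\row_x ((a x)%:C)).

Definition evol m (a : 'I_m -> R) (t : R) : 'M[C]_m :=
  diag_mx (\row_x (cos (- (a x * t)) +i* sin (- (a x * t)))).

Definition gibbs m (a : 'I_m -> R) (beta : R) : 'M[C]_m :=
  diag_mx (\row_x ((expR (- beta * a x) / \sum_y expR (- beta * a y))%:C)).

Definition GPC m (a : 'I_m -> R) (beta : R) (E : 'M[C]_m -> 'M[C]_m) : Prop :=
  [/\ quantum_channel E,
      E (gibbs a beta) = gibbs a beta
    & forall (t : R) (rho : 'M[C]_m), is_state rho ->
        E (evol a t *m rho *m adjmx (evol a t))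
        = evol a t *m E rho *m adjmx (evol a t)].

Definition Qmx m (rho sigma : 'M[C]_m) : 'M[C]_m :=
  1%:M + \sum_(x : 'I_m) \sum_(y : 'I_m | x != y)
           (sigma x y / rho x y) *: delta_mx x y.
End Defs.

(* If Q >= 0, the Schur multiplier X |-> Q o X does the job.  It is completely
   positive by the Schur product theorem: a positive matrix is a nonnegative
   combination of rank-one matrices w w^† (peel off Schur complements), and
   (w w^†) o X = D_w X D_w^† with D_w = diag w.  It is trace preserving because
   Q has unit diagonal, fixes diagonal matrices (hence the Gibbs state) and
   commutes with conjugation by diagonal unitaries (hence is covariant).

   Conversely, covariance of E holds on states, hence on positive matrices and,
   by polarization, on the matrix units |x><y|.  At a suitable time the phases
   picked up by |x><y| and |z><w| differ, because the Bohr spectrum is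
   non-degenerate, so E(|x><y|) has no off-diagonal (z,w) entry unless
   (x,y) = (z,w).  Then s_zw = r_zw E(|z><w|)_zw, and Q is the compression of the
   Choi matrix of E to the vectors |x>|x>, plus the diagonal matrix with
   entries 1 - E(|x><x|)_xx, which are nonnegative by trace preservation. *)

From HB Require Import structures.
From mathcomp Require Import all_boot all_order all_algebra.
From mathcomp.real_closed Require Import complex mxtens.
From mathcomp Require Import reals.
From mathcomp.analysis Require Import sequences exp trigo.
From mathcomp Require Import ring.
Import Order.TTheory GRing.Theory Num.Theory.
Local Open Scope ring_scope.
Set Implicit Arguments. Unset Strict Implicit. Unset Printing Implicit Defensive.

Section GibbsPreservingCovariant.
Variable R : realType.
Local Notation C := R[i].

Lemma conjc_ge0 (x : C) : 0 <= x -> conjc x = x.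
Proof. exact: geC0_conj. Qed.

Lemma adjmxE m n (A : 'M[C]_(m, n)) i j : adjmx A i j = conjc (A j i).
Proof. by rewrite !mxE. Qed.

Lemma adjmxD m n (A B : 'M[C]_(m, n)) : adjmx (A + B) = adjmx A + adjmx B.
Proof. by apply/matrixP => i j; rewrite !mxE rmorphD. Qed.

Lemma adjmxZ m n c (A : 'M[C]_(m, n)) : adjmx (c *: A) = conjc c *: adjmx A.
Proof. by apply/matrixP => i j; rewrite !mxE rmorphM. Qed.

Lemma adjmxM m n p (A : 'M[C]_(m, n)) (B : 'M[C]_(n, p)) :
  adjmx (A *m B) = adjmx B *m adjmx A.
Proof. by rewrite /adjmx map_mxM trmx_mul. Qed.

Lemma adjmxK m n (A : 'M[C]_(m, n)) : adjmx (adjmx A) = A.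
Proof. by apply/matrixP => i j; rewrite !adjmxE conjcK. Qed.

Lemma adjmx_delta m n (i : 'I_m) (j : 'I_n) :
  adjmx (delta_mx i j : 'M[C]_(m, n)) = delta_mx j i.
Proof. by apply/matrixP => k l; rewrite !mxE conjc_nat andbC. Qed.

Lemma hermitianP n (A : 'M[C]_n) :
  adjmx A = A <-> forall i j, conjc (A j i) = A i j.
Proof.
split=> [hA i j | hA]; first by rewrite -adjmxE hA.
by apply/matrixP => i j; rewrite adjmxE hA.
Qed.

Definition form n (A : 'M[C]_n) (u v : 'cV[C]_n) : C := (adjmx u *m A *m v) 0 0.

Lemma formDl n (A : 'M[C]_n) u v w : form A (u + v) w = form A u w + form A v w.
Proof. by rewrite /form adjmxD !mulmxDl mxE. Qed.

Lemma formZl n (A : 'M[C]_n) c u w : form A (c *: u) w = conjc c * form A u w.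
Proof. by rewrite /form adjmxZ -!scalemxAl mxE. Qed.

Lemma formDr n (A : 'M[C]_n) u v w : form A w (u + v) = form A w u + form A w v.
Proof. by rewrite /form mulmxDr mxE. Qed.

Lemma formZr n (A : 'M[C]_n) c u w : form A w (c *: u) = c * form A w u.
Proof. by rewrite /form -scalemxAr mxE. Qed.

Lemma formDA n (A B : 'M[C]_n) u v : form (A + B) u v = form A u v + form B u v.
Proof. by rewrite /form mulmxDr mulmxDl mxE. Qed.

Lemma formZA n (A : 'M[C]_n) c u v : form (c *: A) u v = c * form A u v.
Proof. by rewrite /form -scalemxAr -scalemxAl mxE. Qed.

Lemma form_delta n (A : 'M[C]_n) i j : form A (delta_mx i 0) (delta_mx j 0) = A i j.
Proof. by rewrite /form adjmx_delta -rowE -colE !mxE. Qed.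

Lemma form_adj n (A : 'M[C]_n) u v : adjmx A = A -> conjc (form A u v) = form A v u.
Proof. by move=> hA; rewrite /form -adjmxE !adjmxM adjmxK hA mulmxA. Qed.

Lemma form_rank1 n (w u v : 'cV[C]_n) :
  form (w *m adjmx w) u v = (adjmx u *m w) 0 0 * (adjmx w *m v) 0 0.
Proof. by rewrite /form mulmxA -mulmxA mxE big_ord1. Qed.

Lemma psd0 n : psd (0 : 'M[C]_n).
Proof.
split; first by apply/matrixP => i j; rewrite !mxE conjc0.
by move=> v; rewrite mulmx0 mul0mx mxE.
Qed.

Lemma psdD n (A B : 'M[C]_n) : psd A -> psd B -> psd (A + B).
Proof.
move=> [hA fA] [hB fB]; split; first by rewrite adjmxD hA hB.
by move=> v; rewrite -/(form _ v v) formDA; exact: addr_ge0 (fA v) (fB v).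
Qed.

Lemma psdZ n c (A : 'M[C]_n) : 0 <= c -> psd A -> psd (c *: A).
Proof.
move=> hc [hA fA]; split; first by rewrite adjmxZ conjc_ge0 // hA.
by move=> v; rewrite -/(form _ v v) formZA; exact: mulr_ge0 hc (fA v).
Qed.

Lemma psd_sum I (r : seq I) (P : pred I) n (F : I -> 'M[C]_n) :
  (forall i, P i -> psd (F i)) -> psd (\sum_(i <- r | P i) F i).
Proof. by move=> hF; apply: (big_ind (@psd R n)); [exact: psd0 | exact: psdD |]. Qed.

Lemma psd_rank1 n (w : 'cV[C]_n) : psd (w *m adjmx w).
Proof.
split; first by rewrite adjmxM adjmxK.
move=> v; have -> : adjmx v *m (w *m adjmx w) *m v
    = (adjmx v *m w) *m adjmx (adjmx v *m w).
  by rewrite adjmxM adjmxK !mulmxA.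
by rewrite mxE big_ord1 adjmxE; apply: mul_conjC_ge0.
Qed.

Lemma psd_congr N n (P : 'M[C]_(N, n)) G : psd G -> psd (adjmx P *m G *m P).
Proof.
move=> [hG fG]; split; first by rewrite !adjmxM adjmxK hG mulmxA.
move=> v; have -> : adjmx v *m (adjmx P *m G *m P) *m v
    = adjmx (P *m v) *m G *m (P *m v).
  by rewrite adjmxM !mulmxA.
exact: fG.
Qed.

Lemma psd_mxsub N n (h : 'I_n -> 'I_N) (G : 'M[C]_N) : psd G -> psd (mxsub h h G).
Proof.
have -> : mxsub h h G = adjmx (colsub h 1%:M) *m G *m colsub h 1%:M.
  have -> : adjmx (colsub h 1%:M) = rowsub h (1%:M : 'M[C]_N).
    by apply/matrixP => i j; rewrite !mxE rmorphMn rmorph1 eq_sym.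
  by rewrite mul_rowsub_mx -mxsub_mul mul1mx mulmx1.
exact: psd_congr.
Qed.

Lemma psd_diag_ge0 n (A : 'M[C]_n) i : psd A -> 0 <= A i i.
Proof. by move=> [_ fA]; rewrite -form_delta; apply: fA. Qed.

Lemma psd_diag_mx n (d : 'rV[C]_n) : (forall i, 0 <= d 0 i) -> psd (diag_mx d).
Proof.
move=> hd; rewrite diag_mx_sum_delta; apply: psd_sum => i _; apply: psdZ => //.
have -> : delta_mx i i = delta_mx i 0 *m adjmx (delta_mx i 0 : 'cV[C]_n).
  by rewrite adjmx_delta mul_delta_mx.
exact: psd_rank1.
Qed.

Lemma psd_offdiag_eq0 n (A : 'M[C]_n) i j :
  psd A -> A i i = 0 -> A j j = 0 -> A i j = 0.
Proof.
move=> [hA fA] hi hj; set z := A i j.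
pose u : 'cV[C]_n := delta_mx i 0 + (- conjc z) *: delta_mx j 0.
have fu : form A u u = - (z * conjc z) *+ 2.
  rewrite formDl !formDr !formZl !formZr !form_delta hi hj.
  rewrite -((hermitianP A).1 hA j i) -/z rmorphN /= conjcK; ring.
have : 0 <= - (z * conjc z) *+ 2 by rewrite -fu; apply: fA.
rewrite pmulrn_lge0 // oppr_ge0 => z_le0.
apply/eqP; rewrite -(mul_conjC_eq0 z); apply/eqP/le_anti.
by rewrite z_le0 mul_conjC_ge0.
Qed.

Lemma psd_eq0 n (A : 'M[C]_n) : psd A -> (forall i, A i i = 0) -> A = 0.
Proof. by move=> hA h0; apply/matrixP => i j; rewrite mxE psd_offdiag_eq0. Qed.

Lemma psd_trace_ge0 n (A : 'M[C]_n) : psd A -> 0 <= \tr A.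
Proof. by move=> hA; apply: sumr_ge0 => i _; apply: psd_diag_ge0. Qed.

Lemma psd_trace_eq0 n (A : 'M[C]_n) : psd A -> \tr A = 0 -> A = 0.
Proof.
move=> hA htr; apply: psd_eq0 => // i.
by apply: (psumr_eq0P _ htr) => // j _; apply: psd_diag_ge0.
Qed.

Definition schur_compl n (A : 'M[C]_n) i :=
  A + (- (A i i)^-1) *: (col i A *m adjmx (col i A)).

Lemma schur_complE n (A : 'M[C]_n) i x y :
  schur_compl A i x y = A x y - (A i i)^-1 * (A x i * conjc (A y i)).
Proof. by rewrite mxE [X in _ + X]mxE mxE big_ord1 !mxE mulNr. Qed.

Lemma psd_schur_compl n (A : 'M[C]_n) i :
  psd A -> A i i != 0 -> psd (schur_compl A i).
Proof.
move=> hA d_neq0; have [hAh fA] := hA.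
have cd : conjc (A i i) = A i i by apply/conjc_ge0/psd_diag_ge0.
have herm := (hermitianP A).1 hAh.
split.
  apply/hermitianP => x y; rewrite !schur_complE rmorphB /= !rmorphM /=.
  by rewrite conjc_inv cd conjcK !herm; ring.
move=> u; rewrite -/(form _ u u).
pose e : 'cV[C]_n := delta_mx i 0; pose al := form A e u.
pose w := u + (- (al / A i i)) *: e.
suff -> : form (schur_compl A i) u u = form A w w by apply: fA.
rewrite formDA formZA form_rank1 colE adjmxM hAh mulmxA.
rewrite -/(form A u e) -/(form A e u) -(form_adj e u hAh) -/al.
rewrite formDl !formDr !formZl !formZr form_delta -(form_adj e u hAh) -/al.
by rewrite rmorphN /= rmorphM /= conjc_inv cd; field.
Qed.

Lemma schur_compl_card n (A : 'M[C]_n) i : psd A -> A i i != 0 ->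
  (#|[pred j | schur_compl A i j j != 0%R]| < #|[pred j | A j j != 0%R]|)%N.
Proof.
move=> hA d_neq0; have hS := psd_schur_compl hA d_neq0.
have cd : conjc (A i i) = A i i by apply/conjc_ge0/psd_diag_ge0.
rewrite [X in (_ < X)%N](cardD1 i) inE /= d_neq0 add1n ltnS.
apply/subset_leq_card/subsetP => j; rewrite !inE /= => hj; apply/andP; split.
  by apply: contraNneq hj => ->; rewrite schur_complE cd mulrA mulVf ?mul1r ?subrr.
apply: contraNneq hj => hjj; apply/eqP/le_anti; rewrite psd_diag_ge0 // andbT.
rewrite schur_complE hjj sub0r oppr_le0 mulr_ge0 ?mul_conjC_ge0 //.
by rewrite invr_ge0 psd_diag_ge0.
Qed.

Lemma psd_sum_rank1 n (A : 'M[C]_n) : psd A ->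
  exists s : seq (C * 'cV[C]_n),
    all (fun p => 0 <= p.1) s /\ A = \sum_(p <- s) p.1 *: (p.2 *m adjmx p.2).
Proof.
have [k] := ubnP #|[pred j | A j j != 0]|; elim: k A => // k IH A hk hA.
have [i /= hi|h0] := pickP [pred j | A j j != 0]; last first.
  exists [::]; split=> //; rewrite big_nil; apply: psd_eq0 => // i.
  exact/eqP/negbFE/h0.
have hk' := leq_trans (schur_compl_card hA hi) hk.
have [s [hs eS]] := IH _ hk' (psd_schur_compl hA hi).
exists (((A i i)^-1, col i A) :: s); split.
  by rewrite /= hs andbT invr_ge0 psd_diag_ge0.
by rewrite big_cons /= -eS /schur_compl scaleNr addrC addrNK.
Qed.

Definition hadamard m n (A B : 'M[C]_(m, n)) := \matrix_(i, j) (A i j * B i j).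

Lemma hadamard_suml I (r : seq I) (P : pred I) m n (F : I -> 'M[C]_(m, n)) X :
  hadamard (\sum_(i <- r | P i) F i) X = \sum_(i <- r | P i) hadamard (F i) X.
Proof.
apply/matrixP => x y; rewrite !mxE !summxE big_distrl.
by apply: eq_bigr => i _; rewrite mxE.
Qed.

Lemma hadamardZl m n c (A X : 'M[C]_(m, n)) :
  hadamard (c *: A) X = c *: hadamard A X.
Proof. by apply/matrixP => x y; rewrite !mxE mulrA. Qed.

Lemma adjmx_diag n (d : 'rV[C]_n) : adjmx (diag_mx d) = diag_mx (map_mx conjc d).
Proof.
apply/matrixP => i j; rewrite !mxE eq_sym.
by case: eqP => [->|_]; rewrite ?mulr1n ?mulr0n ?conjc0.
Qed.

Lemma diag_congrE n (d : 'rV[C]_n) X i j :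
  (diag_mx d *m X *m adjmx (diag_mx d)) i j = d 0 i * X i j * conjc (d 0 j).
Proof. by rewrite adjmx_diag mul_diag_mx mul_mx_diag !mxE. Qed.

Lemma hadamard_rank1 n (w : 'cV[C]_n) X :
  hadamard (w *m adjmx w) X = diag_mx w^T *m X *m adjmx (diag_mx w^T).
Proof.
apply/matrixP => i j; rewrite diag_congrE !mxE big_ord1 !mxE.
by rewrite mulrAC mulrC mulrA.
Qed.

Lemma psd_hadamard n (Q X : 'M[C]_n) : psd Q -> psd X -> psd (hadamard Q X).
Proof.
move=> /psd_sum_rank1 [s [hs ->]] hX; rewrite hadamard_suml big_seq.
apply: psd_sum => p /(allP hs) c_ge0; rewrite hadamardZl hadamard_rank1.
apply: psdZ c_ge0 _.
by have := psd_congr (adjmx (diag_mx p.2^T)) hX; rewrite adjmxK.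
Qed.

Lemma QmxE m (rho sigma : 'M[C]_m) x y :
  Qmx rho sigma x y = if x == y then 1 else sigma x y / rho x y.
Proof.
rewrite mxE summxE; under eq_bigr do rewrite summxE.
rewrite (bigD1 x) //= [\sum_(i | i != x) _]big1 => [|x' x'x]; last first.
  by apply: big1 => y' _; rewrite !mxE [x == x']eq_sym (negbTE x'x) mulr0.
rewrite big_mkcond (bigD1 y) //= big1 => [|y' y'y]; last first.
  by rewrite !mxE eqxx [y == y']eq_sym (negbTE y'y) mulr0; case: ifP.
rewrite !mxE !eqxx mulr1 !addr0.
by case: eqVneq => [->|_]; rewrite ?mulr1n ?mulr0n ?add0r ?addr0.
Qed.

Lemma hadamard_Qmx m (rho sigma : 'M[C]_m) :
  (forall x y, rho x y != 0) -> (forall x, rho x x = sigma x x) ->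
  hadamard (Qmx rho sigma) rho = sigma.
Proof.
move=> hr hd; apply/matrixP => x y; rewrite mxE QmxE.
by case: eqVneq => [->|_]; rewrite ?mul1r ?hd ?divfK.
Qed.

Definition phase (q : R) : C := (cos q +i* sin q)%C.

Lemma phase_mul_conj p q : phase p * conjc (phase q) = phase (p - q).
Proof.
apply/eqP; rewrite eq_complex /= cosB sinB; apply/andP; split; apply/eqP; ring.
Qed.

Lemma phaseBpi q : phase (q - pi) = - phase q.
Proof.
apply/eqP; rewrite eq_complex /= cosB sinB cospi sinpi.
by apply/andP; split; apply/eqP; ring.
Qed.

Lemma phase_neq0 q : phase q != 0.
Proof.
apply/negP; rewrite eq_complex /= => /andP [/eqP c0 /eqP s0].
by have := cos2Dsin2 q; rewrite c0 s0 expr0n add0r => /eqP; rewrite eq_sym oner_eq0.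
Qed.

Lemma evol_congrE m (a : 'I_m -> R) t (X : 'M[C]_m) k l :
  (evol a t *m X *m adjmx (evol a t)) k l = phase ((a l - a k) * t) * X k l.
Proof.
rewrite /evol diag_congrE !mxE mulrAC phase_mul_conj.
by congr (phase _ * _); ring.
Qed.

Lemma hadamard_GPC m (a : 'I_m -> R) beta (Q : 'M[C]_m) :
  psd Q -> (forall x, Q x x = 1) -> GPC a beta (hadamard Q).
Proof.
move=> hQ Q1; split; [split|..].
- by move=> c X Y; apply/matrixP => i j; rewrite !mxE mulrDr mulrCA.
- by move=> X; apply: eq_bigr => i _; rewrite mxE Q1 mul1r.
- move=> n X hX; pose snd p := (@mxtens_unindex n m p).2.
  have -> : ampl (hadamard Q) X = hadamard (mxsub snd snd Q) X.
    by apply/matrixP => p q; rewrite !mxE -!surjective_pairing !mxtens_unindexK.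
  exact/psd_hadamard/hX/psd_mxsub.
- apply/matrixP => i j; rewrite !mxE.
  by case: eqVneq => [->|_]; rewrite ?Q1 ?mul1r // mulr0n mulr0.
- by move=> t X _; apply/matrixP => i j; rewrite mxE !evol_congrE mxE mulrCA.
Qed.

Lemma outer_polarization n (e f : 'cV[C]_n) :
  e *m adjmx f =
  2^-1 *: ((e + f) *m adjmx (e + f))
  + ('i / 2) *: ((e + 'i *: f) *m adjmx (e + 'i *: f))
  + (- (1 + 'i) / 2) *: (e *m adjmx e + f *m adjmx f).
Proof.
have i2 : 'i * 'i = -1 :> C by rewrite -expr2 sqrCi.
have ci : ((-1)*i)%C = - 'i :> C by apply/eqP; rewrite eq_complex /= oppr0 !eqxx.
apply/matrixP => k l; rewrite !mxE !big_ord1 !mxE !rmorphD !rmorphM /= ci.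
by field: i2.
Qed.

Section Covariance.
Variables (m : nat) (E : {linear 'M[C]_m -> 'M[C]_m}) (U : 'M[C]_m).

Definition covariant_at (X : 'M[C]_m) :=
  E (U *m X *m adjmx U) = U *m E X *m adjmx U.

Lemma covariant_atD (X Y : 'M[C]_m) :
  covariant_at X -> covariant_at Y -> covariant_at (X + Y).
Proof.
rewrite /covariant_at mulmxDr mulmxDl linearD => -> ->.
by rewrite -mulmxDl -mulmxDr -linearD.
Qed.

Lemma covariant_atZ c (X : 'M[C]_m) : covariant_at X -> covariant_at (c *: X).
Proof.
move=> hX; rewrite /covariant_at -scalemxAr -scalemxAl !linearZ_LR hX.
by rewrite -scalemxAl.
Qed.

Hypothesis covE : forall X, is_state X -> covariant_at X.

Lemma covariant_psd X : psd X -> covariant_at X.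
Proof.
move=> hX; have [tr0|tr_neq0] := eqVneq (\tr X) 0.
  by rewrite /covariant_at (psd_trace_eq0 hX tr0) mulmx0 mul0mx linear0 mulmx0 mul0mx.
have -> : X = \tr X *: ((\tr X)^-1 *: X) by rewrite scalerA mulfV ?scale1r.
apply/covariant_atZ/covE; split; last by rewrite mxtraceZ mulVf.
by apply: (psdZ _ hX); rewrite invr_ge0 psd_trace_ge0.
Qed.

Lemma covariant_delta x y : covariant_at (delta_mx x y).
Proof.
have rank1_cov (v : 'cV[C]_m) : covariant_at (v *m adjmx v).
  exact: covariant_psd (psd_rank1 v).
rewrite -[delta_mx x y](mul_delta_mx (0 : 'I_1)) -[delta_mx 0 y]adjmx_delta.
rewrite outer_polarization; do 2?apply: covariant_atD; apply: covariant_atZ => //.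
exact: covariant_atD.
Qed.

End Covariance.

Section TimeCovariance.
Variables (m : nat) (a : 'I_m -> R) (E : {linear 'M[C]_m -> 'M[C]_m}).
Hypothesis bohrE : nondeg_bohr a.
Hypothesis covE : forall t X, is_state X -> covariant_at E (evol a t) X.

Lemma evol_offdiag_eq0 x y z w :
  z != w -> (x, y) != (z, w) -> E (delta_mx x y) z w = 0.
Proof.
move=> zw xy_zw.
have om_neq0 : (a x - a y) - (a z - a w) != 0.
  rewrite subr_eq0; apply/eqP => /(bohrE x y z w) [[ex ey]|[_ ezw]].
    by rewrite ex ey eqxx in xy_zw.
  by rewrite ezw eqxx in zw.
(* At this time the phases of |x><y| and |z><w| differ by a factor -1. *)
pose t := pi / ((a x - a y) - (a z - a w)).
have := covariant_delta (covE t) x y => /matrixP /(_ z w).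
have -> : evol a t *m delta_mx x y *m adjmx (evol a t)
    = phase ((a y - a x) * t) *: delta_mx x y.
  apply/matrixP => k l; rewrite evol_congrE !mxE.
  by have [->|_] := eqVneq k x; have [->|_] := eqVneq l y; rewrite ?andbF ?mulr0.
have -> : (a y - a x) * t = (a w - a z) * t - pi by rewrite /t; field.
rewrite linearZ_LR evol_congrE !mxE phaseBpi mulNr => /eqP.
rewrite eq_sym -addr_eq0 -mulr2n mulrn_eq0 /= mulf_eq0 (negbTE (phase_neq0 _)).
by move/eqP.
Qed.

Lemma covariant_channel_offdiag X z w :
  z != w -> E X z w = X z w * E (delta_mx z w) z w.
Proof.
move=> zw.
have E0 x y : (x, y) != (z, w) -> (X x y *: E (delta_mx x y)) z w = 0.
  by move=> xy_zw; rewrite mxE evol_offdiag_eq0 ?mulr0.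
rewrite {1}[X]matrix_sum_delta linear_sum summxE.
under eq_bigr do rewrite linear_sum summxE.
rewrite (bigD1 z) //= [\sum_(i | i != z) _]big1 => [|x xz]; last first.
  by apply: big1 => y _; rewrite linearZ_LR E0 // xpair_eqE negb_and xz.
rewrite (bigD1 w) //= [\sum_(i | i != w) _]big1 => [|y yw]; last first.
  by rewrite linearZ_LR E0 // xpair_eqE negb_and yw orbT.
by rewrite !addr0 linearZ_LR mxE.
Qed.

End TimeCovariance.

Definition max_entangled m : 'cV[C]_(m * m) :=
  \col_p ((mxtens_unindex p).1 == (mxtens_unindex p).2)%:R.

Definition choi m (E : 'M[C]_m -> 'M[C]_m) : 'M[C]_(m * m) :=
  ampl E (max_entangled m *m adjmx (max_entangled m)).

Lemma choiE m (E : 'M[C]_m -> 'M[C]_m) x y z w :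
  choi E (mxtens_index (x, z)) (mxtens_index (y, w)) = E (delta_mx x y) z w.
Proof.
rewrite mxE !mxtens_indexK /=; congr (E _ _ _); apply/matrixP => k l.
rewrite !mxE big_ord1 !mxE !mxtens_indexK conjc_nat -natrM mulnb.
by rewrite (eq_sym x) (eq_sym y).
Qed.

Lemma psd_choi m (E : 'M[C]_m -> 'M[C]_m) : quantum_channel E -> psd (choi E).
Proof. by case=> _ _ cpE; apply/cpE/psd_rank1. Qed.

Lemma channel_delta_diag_ge0 m (E : 'M[C]_m -> 'M[C]_m) x z :
  quantum_channel E -> 0 <= E (delta_mx x x) z z.
Proof. by move=> chE; rewrite -choiE; apply/psd_diag_ge0/psd_choi. Qed.

Lemma channel_delta_diag_le1 m (E : 'M[C]_m -> 'M[C]_m) x :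
  quantum_channel E -> E (delta_mx x x) x x <= 1.
Proof.
move=> chE; have [_ trE _] := chE.
have <- : \tr (E (delta_mx x x)) = 1.
  rewrite trE /mxtrace (bigD1 x) //= mxE !eqxx big1 ?addr0 // => k /negbTE kx.
  by rewrite mxE kx.
rewrite /mxtrace (bigD1 x) //= lerDl; apply: sumr_ge0 => z _.
exact: channel_delta_diag_ge0.
Qed.

Lemma GPC_Qmx_psd m (a : 'I_m -> R) beta (rho sigma : 'M[C]_m) :
  nondeg_bohr a -> (forall x y, rho x y != 0) ->
  (exists E, GPC a beta E /\ E rho = sigma) -> psd (Qmx rho sigma).
Proof.
move=> hnd hr [E [[chE _ covE] <-]]; have [linE _ _] := chE.
pose EL : {linear 'M[C]_m -> 'M[C]_m} :=
  HB.pack E (GRing.isLinear.Build _ _ _ _ E linE).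
pose diagx (x : 'I_m) : 'I_(m * m) := mxtens_index (x, x).
have -> : Qmx rho (E rho)
    = mxsub diagx diagx (choi E) + diag_mx (\row_x (1 - E (delta_mx x x) x x)).
  apply/matrixP => x y; rewrite QmxE mxE [mxsub _ _ _ x y]mxE /diagx choiE !mxE.
  case: eqVneq => [->|xy]; first by rewrite mulr1n addrC subrK.
  by rewrite mulr0n addr0 (covariant_channel_offdiag (E := EL) hnd covE) // mulrC mulKf.
apply: psdD; first exact/psd_mxsub/psd_choi.
by apply: psd_diag_mx => x; rewrite mxE subr_ge0 channel_delta_diag_le1.
Qed.

End GibbsPreservingCovariant.

Unset Implicit Arguments.

Theorem theorem4 (R : realType) (m : nat) (a : 'I_m -> R) (beta : R)
  (rho sigma : 'M[R[i]]_m) :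
  0 < beta ->
  nondeg_bohr a ->
  is_state rho -> is_state sigma ->
  (forall x y : 'I_m, rho x y != 0) ->
  (forall x : 'I_m, rho x x = sigma x x) ->
  (exists E : 'M[R[i]]_m -> 'M[R[i]]_m, GPC a beta E /\ E rho = sigma)
  <-> psd (Qmx rho sigma).
Proof.
move=> _ hnd _ _ hr hd; split; first exact: GPC_Qmx_psd.
move=> hQ; exists (hadamard (Qmx rho sigma)); split; last exact: hadamard_Qmx.
by apply: hadamard_GPC => // x; rewrite QmxE eqxx.
Qed.
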